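(* Let $A$ be a Banach lattice algebra with identity $e$. The set $OI(A)$ is a Boolean algebra, with minimum $0$, maximum $e$ and operations \[\overline p=e-p,\qquad p\vee q=p+q-pq,\qquad p\wedge q=pq\qquad(p,q\in OI(A)),\] and these suprema and infima coincide with the suprema and infima of $p,q$ computed in the lattice $A$.
   Context: A Banach lattice algebra is a real Banach lattice $A$ with an associative bilinear product making it a Banach algebra such that $xy\ge0$ whenever $x,y\ge0$; identity $e$ means a multiplicative identity with $\|e\|=1$. $OI(A)=\{p\in A: p^2=p,\ 0\le p\le e\}$. *)

From HB Require Import structures.
From mathcomp Require Import all_boot all_order all_algebra.
From mathcomp Require Import all_classical all_reals all_analysis.
Set Implicit Arguments. Unset Strict Implicit. Unset Printing Implicit Defensive.
Import Order.TTheory GRing.Theory Num.Theory.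
Import numFieldNormedType.Exports.
Local Open Scope ring_scope.

Record BanachLatticeAlgebra (R : realType) (V : completeNormedModType R) := {
  bla_le : V -> V -> Prop;
  bla_le_refl : forall x, bla_le x x;
  bla_le_antisym : forall x y, bla_le x y -> bla_le y x -> x = y;
  bla_le_trans : forall x y z, bla_le x y -> bla_le y z -> bla_le x z;
  bla_le_add : forall x y z, bla_le x y -> bla_le (x + z) (y + z);
  bla_le_scale : forall (a : R) x y, 0 <= a -> bla_le x y -> bla_le (a *: x) (a *: y);
  bla_join : V -> V -> V;
  bla_meet : V -> V -> V;
  bla_join_ub_l : forall x y, bla_le x (bla_join x y);
  bla_join_ub_r : forall x y, bla_le y (bla_join x y);
  bla_join_least : forall x y z, bla_le x z -> bla_le y z -> bla_le (bla_join x y) z;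
  bla_meet_lb_l : forall x y, bla_le (bla_meet x y) x;
  bla_meet_lb_r : forall x y, bla_le (bla_meet x y) y;
  bla_meet_greatest : forall x y z, bla_le z x -> bla_le z y -> bla_le z (bla_meet x y);
  (* lattice norm: |x| <= |y| implies ||x|| <= ||y||, with |x| = x v (-x) *)
  bla_lattice_norm : forall x y,
    bla_le (bla_join x (- x)) (bla_join y (- y)) -> `|x| <= `|y|;
  bla_mul : V -> V -> V;
  bla_mulA : forall x y z, bla_mul x (bla_mul y z) = bla_mul (bla_mul x y) z;
  bla_mulDl : forall x y z, bla_mul (x + y) z = bla_mul x z + bla_mul y z;
  bla_mulDr : forall x y z, bla_mul x (y + z) = bla_mul x y + bla_mul x z;
  bla_mulZl : forall (a : R) x y, bla_mul (a *: x) y = a *: bla_mul x y;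
  bla_mulZr : forall (a : R) x y, bla_mul x (a *: y) = a *: bla_mul x y;
  bla_norm_mul : forall x y, `|bla_mul x y| <= `|x| * `|y|;
  bla_mul_pos : forall x y, bla_le 0 x -> bla_le 0 y -> bla_le 0 (bla_mul x y)
}.

Definition is_identity (R : realType) (V : completeNormedModType R)
  (A : BanachLatticeAlgebra V) (e : V) : Prop :=
  (forall x, bla_mul A e x = x /\ bla_mul A x e = x) /\ `|e| = 1.

Definition OI (R : realType) (V : completeNormedModType R)
  (A : BanachLatticeAlgebra V) (e : V) (p : V) : Prop :=
  bla_mul A p p = p /\ bla_le A 0 p /\ bla_le A p e.

Definition is_boolean_algebra (T : Type) (le : T -> T -> Prop) (S : T -> Prop)
  (bot top : T) (compl : T -> T) (jn mt : T -> T -> T) : Prop :=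
  (S bot /\ S top) /\
      ((forall p, S p -> S (compl p)) /\
      (forall p q, S p -> S q -> S (jn p q) /\ S (mt p q))) /\
      (forall p, S p -> le bot p /\ le p top) /\
      (forall p q, S p -> S q ->
         [/\ le p (jn p q), le q (jn p q) &
             (forall r, S r -> le p r -> le q r -> le (jn p q) r)] /\
         [/\ le (mt p q) p, le (mt p q) q &
             (forall r, S r -> le r p -> le r q -> le r (mt p q))]) /\
      (forall p q r, S p -> S q -> S r ->
         mt p (jn q r) = jn (mt p q) (mt p r)) /\
      (forall p, S p -> jn p (compl p) = top /\ mt p (compl p) = bot).

From HB Require Import structures.
From mathcomp Require Import all_boot all_order all_algebra.
From mathcomp Require Import all_classical all_reals all_analysis.
Import Order.TTheory GRing.Theory Num.Theory.
Import numFieldNormedType.Exports.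
Local Open Scope ring_scope.

(** The heart of the matter is that the identity is positive.  Write
    e = u - v with u = sup(e, 0) and v = u - e, both positive, and ||u|| <= 1.
    Multiplying e by u and v gives u u = u + u v and u v = v + v v, and
    iterating shows u^(n+1) >= u + n v, so n ||v|| <= 1 for every n and v = 0.
    Once e >= 0, a positive r below p in OI(A) satisfies (e - p) r = 0, i.e.
    r = p r; hence anything below p and q lies below p q, which is itself below
    both, so p q is the infimum.  Commutativity of the product on OI(A) follows
    from the symmetry of the infimum, and the supremum is obtained from the
    infimum of the complements through e - (p + q - p q) = (e - p)(e - q). *)

Set Implicit Arguments. Unset Strict Implicit.

Lemma natmul_bounded_eq0 (R : archiRealFieldType) (x C : R) :
  0 <= x -> (forall n : nat, n%:R * x <= C) -> x = 0.
Proof.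
move=> x_ge0 bounded; apply/eqP; rewrite eq_le x_ge0 andbT leNgt; apply/negP => x_gt0.
have C_ge0 : 0 <= C by have := bounded 0%N; rewrite mul0r.
have := archi_boundP (divr_ge0 C_ge0 (ltW x_gt0)).
rewrite -(ltr_pM2r x_gt0) divfK ?gt_eqF // => /lt_le_trans /(_ (bounded _)).
by rewrite ltxx.
Qed.

Section BanachLatticeAlgebraTheory.
Variables (R : realType) (V : completeNormedModType R) (A : BanachLatticeAlgebra V).
Local Notation le := (bla_le A).
Local Notation mul := (bla_mul A).
Local Notation join := (bla_join A).
Local Notation meet := (bla_meet A).

Lemma bla_mulNl x y : mul (- x) y = - mul x y.
Proof. by rewrite -scaleN1r bla_mulZl scaleN1r. Qed.

Lemma bla_mulNr x y : mul x (- y) = - mul x y.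
Proof. by rewrite -scaleN1r bla_mulZr scaleN1r. Qed.

Lemma bla_mulBl x y z : mul (x - y) z = mul x z - mul y z.
Proof. by rewrite bla_mulDl bla_mulNl. Qed.

Lemma bla_mulBr x y z : mul x (y - z) = mul x y - mul x z.
Proof. by rewrite bla_mulDr bla_mulNr. Qed.

Lemma bla_mul0l x : mul 0 x = 0.
Proof. by have := bla_mulBl 0 0 x; rewrite !subrr. Qed.

Lemma bla_subr_ge0 x y : le 0 (y - x) <-> le x y.
Proof.
split=> [|le_xy]; first by move=> /(bla_le_add x); rewrite add0r subrK.
by have := bla_le_add (- x) le_xy; rewrite subrr.
Qed.

Lemma bla_lerB2l z x y : le (z - x) (z - y) <-> le y x.
Proof.
have -> : le (z - x) (z - y) <-> le 0 (x - y).
  by rewrite -bla_subr_ge0 opprB addrC addrA subrK.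
exact: bla_subr_ge0.
Qed.

Lemma bla_addr_ge0 x y : le 0 x -> le 0 y -> le 0 (x + y).
Proof.
move=> x_ge0 y_ge0; apply: bla_le_trans y_ge0 _.
by have := bla_le_add y x_ge0; rewrite add0r.
Qed.

Lemma bla_scaler_ge0 (a : R) x : 0 <= a -> le 0 x -> le 0 (a *: x).
Proof. by move=> a_ge0 /(bla_le_scale a_ge0); rewrite scaler0. Qed.

Lemma bla_mul_le2l x y z : le 0 x -> le y z -> le (mul x y) (mul x z).
Proof.
by move=> x_ge0 /bla_subr_ge0 /(bla_mul_pos x_ge0); rewrite bla_mulBr bla_subr_ge0.
Qed.

Lemma bla_mul_le2r x y z : le 0 z -> le x y -> le (mul x z) (mul y z).
Proof.
by move=> z_ge0 /bla_subr_ge0 /bla_mul_pos /(_ z_ge0); rewrite bla_mulBl bla_subr_ge0.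
Qed.

Lemma bla_meetC x y : meet x y = meet y x.
Proof.
by apply: bla_le_antisym; apply: bla_meet_greatest;
  [exact: bla_meet_lb_r | exact: bla_meet_lb_l | exact: bla_meet_lb_r | exact: bla_meet_lb_l].
Qed.

Lemma bla_join_opp_ge0 x : le 0 (join x (- x)).
Proof.
set a := join x (- x).
have a2_ge0 : le 0 ((a - x) + (a - - x)).
  by apply: bla_addr_ge0; apply/bla_subr_ge0; [exact: bla_join_ub_l | exact: bla_join_ub_r].
have half_ge0 : (0 : R) <= 2^-1 by rewrite invr_ge0 ler0n.
move: (bla_scaler_ge0 half_ge0 a2_ge0).
rewrite opprK addrACA addNr addr0 scalerDr -scalerDl.
by rewrite -[in X in X *: _](mul1r 2^-1) -splitr scale1r.
Qed.

Lemma bla_join_opp_id x : le 0 x -> join x (- x) = x.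
Proof.
move=> x_ge0; apply: bla_le_antisym; last exact: bla_join_ub_l.
apply: bla_join_least; first exact: bla_le_refl.
by apply: (bla_le_trans _ x_ge0); apply/bla_subr_ge0; rewrite sub0r opprK.
Qed.

Lemma bla_norm_le x y : le 0 x -> le x y -> `|x| <= `|y|.
Proof.
move=> x_ge0 le_xy; apply: (bla_lattice_norm (b := A)).
by rewrite bla_join_opp_id // bla_join_opp_id //; exact: bla_le_trans le_xy.
Qed.

Section PowerGrowth.
Variables u v : V.
Hypotheses (u_ge0 : le 0 u) (v_ge0 : le 0 v) (norm_u : `|u| <= 1).
Hypotheses (mul_uu : mul u u = u + mul u v) (mul_uv : mul u v = v + mul v v).

Lemma iter_mul_norm_le1 n : `|iter n (mul u) u| <= 1.
Proof.
elim: n => [|n IHn] //=; apply: le_trans (bla_norm_mul _ _ _) _.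
by rewrite -[1]mul1r; apply: ler_pM.
Qed.

Lemma iter_mul_ge n : le (u + n%:R *: v) (iter n (mul u) u).
Proof.
elim: n => [|n IHn] /=; first by rewrite scale0r addr0; exact: bla_le_refl.
apply: bla_le_trans (bla_mul_le2l u_ge0 IHn).
have -> : mul u (u + n%:R *: v) = u + n.+1%:R *: v + n.+1%:R *: mul v v.
  rewrite bla_mulDr bla_mulZr mul_uu -addrA -{1}[mul u v]scale1r -scalerDl.
  by rewrite mul_uv nat1r scalerDr addrA.
apply/bla_subr_ge0; rewrite addrC addKr.
exact: bla_scaler_ge0 (ler0n _ _) (bla_mul_pos v_ge0 v_ge0).
Qed.

Lemma eq0_of_power_growth : v = 0.
Proof.
apply/eqP; rewrite -normr_eq0; apply/eqP/(natmul_bounded_eq0 (normr_ge0 v)) => n.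
rewrite -[n%:R](@ger0_norm _ _ (ler0n R n)) -normrZ.
apply: le_trans (iter_mul_norm_le1 n); apply: bla_norm_le.
- exact: bla_scaler_ge0 (ler0n _ _) v_ge0.
- by apply: bla_le_trans (iter_mul_ge n); apply/bla_subr_ge0; rewrite addrK.
Qed.

End PowerGrowth.

Section Identity.
Variable e : V.
Hypothesis he : is_identity A e.

Lemma identity_mul1r x : mul e x = x.
Proof. exact: (he.1 x).1. Qed.

Lemma identity_mulr1 x : mul x e = x.
Proof. exact: (he.1 x).2. Qed.

Lemma identity_ge0 : le 0 e.
Proof.
set u := join e 0; set v := u - e.
have u_ge0 : le 0 u by exact: bla_join_ub_r.
have v_ge0 : le 0 v by apply/bla_subr_ge0; exact: bla_join_ub_l.
have eE : e = u - v by rewrite opprB addrC subrK.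
have norm_u : `|u| <= 1.
  rewrite -he.2; apply: (bla_lattice_norm (b := A)).
  rewrite bla_join_opp_id //; apply: bla_join_least; first exact: bla_join_ub_l.
  exact: bla_join_opp_ge0.
have mul_uu : mul u u = u + mul u v.
  by apply/eqP; rewrite -subr_eq -bla_mulBr -eE identity_mulr1.
have mul_uv : mul u v = v + mul v v.
  by apply/eqP; rewrite -subr_eq -bla_mulBl -eE identity_mul1r.
by rewrite eE (eq0_of_power_growth u_ge0 v_ge0 norm_u mul_uu mul_uv) subr0.
Qed.

Lemma bla_mul_le_l p q : le 0 p -> le q e -> le (mul p q) p.
Proof. by move=> p_ge0 /(bla_mul_le2l p_ge0); rewrite identity_mulr1. Qed.

Lemma bla_mul_le_r p q : le p e -> le 0 q -> le (mul p q) q.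
Proof. by move=> le_pe /bla_mul_le2r /(_ le_pe); rewrite identity_mul1r. Qed.

Lemma OI0 : OI A e 0.
Proof. by split; [rewrite bla_mul0l | split; [exact: bla_le_refl | exact: identity_ge0]]. Qed.

Lemma OIe : OI A e e.
Proof.
by split; [rewrite identity_mul1r | split; [exact: identity_ge0 | exact: bla_le_refl]].
Qed.

Lemma OI_mul_compl p : OI A e p -> mul p (e - p) = 0.
Proof. by case=> pp _; rewrite bla_mulBr identity_mulr1 pp subrr. Qed.

Lemma OI_compl p : OI A e p -> OI A e (e - p).
Proof.
move=> Op; have [_ [p_ge0 le_pe]] := Op; split; last split.
- by rewrite bla_mulBl OI_mul_compl // identity_mul1r subr0.
- exact/bla_subr_ge0.
- by apply/bla_subr_ge0; rewrite opprB addrC subrK.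
Qed.

Lemma OI_mul_id p r : OI A e p -> le 0 r -> le r p -> mul p r = r.
Proof.
move=> [pp [_ le_pe]] r_ge0 le_rp.
have compl_ge0 : le 0 (e - p) by exact/bla_subr_ge0.
have : le (mul (e - p) r) (mul (e - p) p) by exact: bla_mul_le2l.
rewrite [in X in le _ X]bla_mulBl identity_mul1r pp subrr => le0.
move: (bla_le_antisym le0 (bla_mul_pos compl_ge0 r_ge0)).
by rewrite bla_mulBl identity_mul1r => /eqP; rewrite subr_eq0 => /eqP.
Qed.

Lemma OI_meetE p q : OI A e p -> OI A e q -> meet p q = mul p q.
Proof.
move=> Op Oq; have [_ [p_ge0 le_pe]] := Op; have [_ [q_ge0 le_qe]] := Oq.
apply: bla_le_antisym; last first.
  by apply: bla_meet_greatest; [exact: bla_mul_le_l | exact: bla_mul_le_r].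
have meet_ge0 : le 0 (meet p q) by exact: bla_meet_greatest.
rewrite -(OI_mul_id Op meet_ge0 (bla_meet_lb_l _ _ _)).
exact: bla_mul_le2l (bla_meet_lb_r _ _ _).
Qed.

Lemma OI_mulC p q : OI A e p -> OI A e q -> mul p q = mul q p.
Proof. by move=> Op Oq; rewrite -(OI_meetE Op Oq) -(OI_meetE Oq Op) bla_meetC. Qed.

Lemma OI_mul p q : OI A e p -> OI A e q -> OI A e (mul p q).
Proof.
move=> Op Oq; have [pp [p_ge0 le_pe]] := Op; have [qq [q_ge0 _]] := Oq.
split; last split.
- rewrite -bla_mulA [mul q (mul p q)]bla_mulA (OI_mulC Oq Op) -bla_mulA qq.
  by rewrite bla_mulA pp.
- exact: bla_mul_pos.
- by rewrite -(OI_meetE Op Oq); exact: bla_le_trans (bla_meet_lb_l _ _ _) le_pe.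
Qed.

Lemma compl_join_mul p q : e - (p + q - mul p q) = mul (e - p) (e - q).
Proof.
rewrite bla_mulBl !bla_mulBr identity_mul1r identity_mulr1 identity_mul1r.
by rewrite [p + q]addrC -addrA opprD addrA.
Qed.

Lemma OI_join p q : OI A e p -> OI A e q -> OI A e (p + q - mul p q).
Proof.
move=> Op Oq; have := OI_compl (OI_mul (OI_compl Op) (OI_compl Oq)).
by rewrite -compl_join_mul opprB addrC subrK.
Qed.

Lemma OI_joinE p q : OI A e p -> OI A e q -> join p q = p + q - mul p q.
Proof.
move=> Op Oq; have [_ [p_ge0 le_pe]] := Op; have [_ [q_ge0 le_qe]] := Oq.
apply: bla_le_antisym.
  apply: bla_join_least; apply/bla_subr_ge0.
  - rewrite addrAC [p + q]addrC addrK -[X in X - _]identity_mul1r -bla_mulBl.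
    by apply: (bla_mul_pos _ q_ge0); exact/bla_subr_ge0.
  - rewrite addrAC addrK -[X in X - _]identity_mulr1 -bla_mulBr.
    by apply: bla_mul_pos; last exact/bla_subr_ge0.
apply/(bla_lerB2l e); rewrite compl_join_mul -(OI_meetE (OI_compl Op) (OI_compl Oq)).
by apply: bla_meet_greatest; apply/bla_lerB2l; [exact: bla_join_ub_l | exact: bla_join_ub_r].
Qed.

Lemma OI_mul_joinDr p q r : OI A e p -> OI A e q ->
  mul p (q + r - mul q r) = mul p q + mul p r - mul (mul p q) (mul p r).
Proof.
move=> Op Oq; rewrite bla_mulBr bla_mulDr; congr (_ - _).
rewrite -bla_mulA [mul q (mul p r)]bla_mulA (OI_mulC Oq Op) -!bla_mulA.
by rewrite [mul p (mul p _)]bla_mulA Op.1.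
Qed.

End Identity.
End BanachLatticeAlgebraTheory.

Theorem mainTheorem6 (R : realType) (V : completeNormedModType R)
  (A : BanachLatticeAlgebra V) (e : V) (he : is_identity A e) :
  is_boolean_algebra (bla_le A) (OI A e) 0 e
    (fun p => e - p)
    (fun p q => p + q - bla_mul A p q)
    (fun p q => bla_mul A p q)
  /\ (forall p q, OI A e p -> OI A e q ->
        bla_join A p q = p + q - bla_mul A p q /\
        bla_meet A p q = bla_mul A p q).
Proof.
split=> [|p q Op Oq]; last by rewrite (OI_joinE he Op Oq) (OI_meetE he Op Oq).
split; first by split; [exact: OI0 he | exact: OIe he].
split.
  split=> [p | p q Op Oq]; first exact: OI_compl.
  by split; [exact: OI_join | exact: OI_mul].
split; first by move=> p [_].
split.
  move=> p q Op Oq; rewrite -(OI_joinE he Op Oq) -(OI_meetE he Op Oq).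
  split; split; [exact: bla_join_ub_l | exact: bla_join_ub_r | | exact: bla_meet_lb_l
    | exact: bla_meet_lb_r | ].
  - by move=> r _; exact: bla_join_least.
  - by move=> r _; exact: bla_meet_greatest.
split; first by move=> p q r Op Oq _; exact: (OI_mul_joinDr he r Op Oq).
by move=> p Op; rewrite (OI_mul_compl he Op) subr0 addrC subrK.
Qed.
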